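(* Let $(R,\delta_R^* )$ be an iterative $q$-difference ring which is an integral domain, and let $S\subset R$ be a multiplicatively closed subset with $0\notin S$ and $\sigma_q(S)\subseteq S$. Then there exists a unique iterative $q$-difference operator $\delta_{S^{-1}R}^*$ on $S^{-1}R$ extending $\delta_R^*$.
   Context: Let $C$ be an algebraically closed field and $q\in C$, $q\ne1$. Let $F=C(t)$ with the automorphism $\sigma_q(f(t))=f(qt)$. $\binom{r}{k}_q$ is the value at $q$ of the Gaussian polynomial $\prod_{i=1}^{k}\frac{1-x^{r-i+1}}{1-x^{i}}\in\mathbb Z[x]$. An iterative $q$-difference ring is a commutative $F$-algebra $R$ with a ring automorphism $\sigma_q$ extending that of $F$ together with an iterative $q$-difference operator, i.e. a family $\delta_R^*=(\delta_R^{(k)})_{k\in\mathbb N}$ of maps $R\to R$ such that for all $a,b\in R$, $i,j,k\in\mathbb N$: $\delta_R^{(0)}=\mathrm{id}$; $\delta_R^{(1)}=\frac{\sigma_q-\mathrm{id}}{(q-1)t}$; $\delta_R^{(k)}$ is additive; $\delta_R^{(k)}(ab)=\sum_{i+j=k}\sigma_q^i(\delta_R^{(j)}(a))\delta_R^{(i)}(b)$; $\delta_R^{(i)}\circ\delta_R^{(j)}=\binom{i+j}{i}_q\delta_R^{(i+j)}$. (On $S^{-1}R$, $\sigma_q$ is extended by $\sigma_q(a/s)=\sigma_q(a)/\sigma_q(s)$.) *)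

From HB Require Import structures.
From mathcomp Require Import all_boot all_order all_algebra.
Set Implicit Arguments. Unset Strict Implicit. Unset Printing Implicit Defensive.
Import Order.TTheory GRing.Theory Num.Theory.
Local Open Scope ring_scope.
From mathcomp Require Import fraction generic_quotient.

Notation "x %:F" := (@FracField.tofrac _ x) : ring_scope.

(* Extension of a map f : R -> R to the fraction field of R, by
   f(a/b) := f(a)/f(b), computed on the canonical representative of the class.
   (Well defined, i.e. independent of the representative, when f is an
   injective ring morphism.) *)
Definition frac_lift (R : idomainType) (f : R -> R) (x : {fraction R})
  : {fraction R} :=
  let r := repr x in (f \n_r)%:F / (f \d_r)%:F.

Notation ratfun C := {fraction {poly C}}.

Definition sigma_poly (C : closedFieldType) (q : C) (p : {poly C}) : {poly C} :=
  p \Po (q *: 'X).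
Definition sigmaF (C : closedFieldType) (q : C) : ratfun C -> ratfun C :=
  frac_lift (sigma_poly q).

Definition qm1t (C : closedFieldType) (q : C) : ratfun C :=
  ((q - 1) *: 'X)%:F.

(* Gaussian polynomial prod_{i=1}^k (1 - x^(r-i+1)) / (1 - x^i) in Z[x]
   (the division is exact; the divisor has unit leading coefficient) *)
Definition gauss_poly (r k : nat) : {poly int} :=
  (\prod_(1 <= i < k.+1) (1 - 'X^(r.+1 - i)))
    %/ (\prod_(1 <= i < k.+1) (1 - 'X^i)).

Definition qbinom (C : closedFieldType) (q : C) (r k : nat) : C :=
  (map_poly (fun z : int => z%:~R) (gauss_poly r k)).[q].

(* Iterative q-difference operator d on the subring D of the commutative
   ring A, where A is an F-algebra via phi and sig is the automorphism
   (restricted to D). *)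
Definition is_iter_qdiff (C : closedFieldType) (q : C) (A : comNzRingType)
    (D : A -> Prop) (phi : ratfun C -> A) (sig : A -> A)
    (d : nat -> A -> A) : Prop :=
  [/\ (forall k a, D a -> D (d k a)),
      (forall a, D a -> d 0%N a = a)
    & (forall a, D a -> d 1%N a = (sig a - a) * phi (qm1t q)^-1)] /\
  [/\ (forall k a b, D a -> D b -> d k (a + b) = d k a + d k b),
      (forall k a b, D a -> D b ->
          d k (a * b) = \sum_(i < k.+1) iter i sig (d (k - i)%N a) * d i b)
    & (forall i j a, D a ->
          d i (d j a) = phi ((qbinom q (i + j) i)%:P)%:F * d (i + j)%N a)].

(* S^{-1}R, realized (R being a domain and 0 \notin S) as the subring
   { a/s : a in R, s in S } of the fraction field of R *)
Definition loc (R : idomainType) (S : pred R) (x : {fraction R}) : Prop :=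
  exists a s, s \in S /\ x = a%:F / s%:F.

From HB Require Import structures.
From mathcomp Require Import all_boot all_order all_algebra.
From mathcomp Require Import fraction generic_quotient.
From mathcomp Require Import ring zify.
From Stdlib Require Import FunctionalExtensionality.
Set Implicit Arguments.
Unset Strict Implicit.
Unset Printing Implicit Defensive.
Import GRing.Theory.
Local Open Scope ring_scope.

(* Record an operator through its Taylor sequences k |-> delta^(k) a.  The
   product rule says that a |-> (delta^(k) a)_k is multiplicative into the
   sequences over Frac(R) with the sigma-twisted convolution product, in which
   every sequence with nonzero constant term is cancellable and divides every
   other one.  For x = a/s the rule forces taylor(s) * delta(x) = taylor(a);
   this gives uniqueness, and taking it as a definition gives an operator
   satisfying the product rule, the rules for delta^(0), delta^(1) and
   additivity, and preserving S^-1 R since only the sigma^k(s) get inverted.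
   Iterativity delta^(i) delta^(j) = c_ij delta^(i+j) on fractions follows by
   induction on i + j: for x = a/u, the defect of u x = a is a combination of
   the defects of x at smaller indices plus the defect at (i, j) times
   sigma^(i+j)(u), plus a linear form in the Taylor row (delta^(k) x)_(k<=i+j)
   that vanishes on the Taylor rows of ring elements.  Multiplication by u acts
   on Taylor rows by an invertible triangular matrix, so by Cayley-Hamilton the
   Taylor row of a/u is a linear combination of Taylor rows of the u^k a, and
   the linear form vanishes on it too. *)

Section IterMorphism.
Variables (K : nzRingType) (s : {rmorphism K -> K}) (n : nat).

Lemma iter_is_zmod_morphism : zmod_morphism (iter n s).
Proof. by elim: n => // m IH x y /=; rewrite IH rmorphB. Qed.

Lemma iter_is_monoid_morphism : monoid_morphism (iter n s).
Proof. by split=> [|x y]; elim: n => //= m ->; rewrite ?rmorph1 ?rmorphM. Qed.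

HB.instance Definition _ :=
  GRing.isZmodMorphism.Build K K (iter n s) iter_is_zmod_morphism.
HB.instance Definition _ :=
  GRing.isMonoidMorphism.Build K K (iter n s) iter_is_monoid_morphism.

End IterMorphism.

Section FracLift.
Variables (R : idomainType) (f : {rmorphism R -> R}).
Hypothesis f_inj : injective f.
Local Notation K := {fraction R}.

Lemma rmorph_inj_eq0 (a : R) : (f a == 0) = (a == 0).
Proof. by rewrite -{1}(rmorph0 f) (inj_eq f_inj). Qed.

Lemma frac_numden (x : K) : x = (\n_(repr x))%:F / (\d_(repr x))%:F.
Proof.
have d0 : (\d_(repr x))%:F != 0 :> K by rewrite tofrac_eq0 denom_ratioP.
apply: (mulIf d0); rewrite divfK // -[x in x * _]reprK /GRing.mul /= !piE.
apply/eqmodP; rewrite /= FracField.equivfE /FracField.mulf /=.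
by rewrite !numden_Ratio ?mulf_neq0 ?oner_eq0 ?denom_ratioP // !mulr1 mulrC.
Qed.

Lemma frac_repr (x : K) : exists a b, b != 0 /\ x = a%:F / b%:F.
Proof. by exists \n_(repr x), \d_(repr x); rewrite denom_ratioP -frac_numden. Qed.

Lemma eq_frac (a b c d : R) : b != 0 -> d != 0 ->
  (a%:F / b%:F == c%:F / d%:F :> K) = (a * d == c * b).
Proof. by move=> b0 d0; rewrite eqr_div ?tofrac_eq0 // -!tofracM tofrac_eq. Qed.

Lemma frac_lift_frac (a b : R) : b != 0 ->
  frac_lift f (a%:F / b%:F) = (f a)%:F / (f b)%:F.
Proof.
move=> b0; rewrite /frac_lift; set x := a%:F / b%:F.
have d0 := denom_ratioP (repr x).
have : x == (\n_(repr x))%:F / (\d_(repr x))%:F by rewrite -frac_numden.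
rewrite eq_frac // => /eqP ad.
by apply/eqP; rewrite eq_frac ?rmorph_inj_eq0 // -!rmorphM ad.
Qed.

Lemma frac_lift_tofrac (a : R) : frac_lift f a%:F = (f a)%:F.
Proof.
by rewrite -[a%:F]divr1 -tofrac1 frac_lift_frac ?oner_eq0 // rmorph1 tofrac1 divr1.
Qed.

Lemma frac_lift_is_zmod_morphism : zmod_morphism (frac_lift f).
Proof.
move=> x y; have [a [b [b0 ->]]] := frac_repr x; have [c [d [d0 ->]]] := frac_repr y.
rewrite -mulNr -tofracN addf_div ?tofrac_eq0 // -!tofracM -tofracD.
rewrite !frac_lift_frac ?mulf_neq0 // -mulNr -tofracN.
by rewrite addf_div ?tofrac_eq0 ?rmorph_inj_eq0 // !rmorphD !rmorphM rmorphN.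
Qed.

Lemma frac_lift_is_monoid_morphism : monoid_morphism (frac_lift f).
Proof.
split=> [|x y]; first by rewrite -tofrac1 frac_lift_tofrac rmorph1.
have [a [b [b0 ->]]] := frac_repr x; have [c [d [d0 ->]]] := frac_repr y.
by rewrite mulf_div -!tofracM !frac_lift_frac ?mulf_neq0 // mulf_div !rmorphM.
Qed.

End FracLift.

Section TwistedProduct.
Variables (K : fieldType) (sigma : {rmorphism K -> K}).

Definition tmul (u v : nat -> K) : nat -> K :=
  fun k => \sum_(i < k.+1) iter i sigma (u (k - i)%N) * v i.

Lemma tmulA u v w : tmul u (tmul v w) = tmul (tmul u v) w.
Proof.
apply: functional_extensionality => k; rewrite /tmul.
pose T i l := iter l sigma (u (k - l)%N) * (iter i sigma (v (l - i)%N) * w i).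
transitivity (\sum_(i < k.+1) \sum_(l < k.+1 | (i <= l)%N) T i l).
  under eq_bigr => l _ do rewrite mulr_sumr (big_ord_widen k.+1 (T^~ l) (ltn_ord l)).
  by rewrite (exchange_big_dep xpredT).
apply: eq_bigr => i _.
have -> : \sum_(l < k.+1 | (i <= l)%N) T i l = \sum_(i <= l < k.+1) T i l.
  by rewrite big_geq_mkord.
rewrite -{1}[val i]add0n big_addn big_mkord (@subSn i k (ltn_ord i)).
rewrite (rmorph_sum (iter i sigma)) mulr_suml; apply: eq_bigr => l _.
by rewrite /T addnK (rmorphM (iter i sigma)) [(l + i)%N]addnC subnDA iterD mulrA.
Qed.

Lemma tmulDr u v w :
  tmul u (fun n => v n + w n) = fun k => tmul u v k + tmul u w k.
Proof.
apply: functional_extensionality => k; rewrite -big_split.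
by apply: eq_bigr => i _; rewrite mulrDr.
Qed.

Lemma tmulI u : u 0%N != 0 -> injective (tmul u).
Proof.
move=> u0 v w E; apply: functional_extensionality => k; elim/ltn_ind: k => k IH.
have := congr1 (fun f => f k) E; rewrite /tmul !big_ord_recr /= subnn.
under eq_bigr => i _ do rewrite IH //.
by move/addrI/mulfI; apply; rewrite fmorph_eq0.
Qed.

(* Forward substitution: [tdiv_upto b u k] holds the coefficients of index
   at most [k] of the solution of [tmul u v = b]. *)
Fixpoint tdiv_upto (b u : nat -> K) (k : nat) : nat -> K :=
  if k is k'.+1 then
    let v := tdiv_upto b u k' in
    fun n => if n == k then
       (b k - \sum_(i < k) iter i sigma (u (k - i)%N) * v i) / iter k sigma (u 0%N)
     else v n
  else fun=> b 0%N / u 0%N.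

Definition tdiv (b u : nat -> K) : nat -> K := fun n => tdiv_upto b u n n.

Lemma tdiv_uptoE b u k n : (n <= k)%N -> tdiv_upto b u k n = tdiv b u n.
Proof.
elim: k => [|k IH] nk; first by move: nk; rewrite leqn0 => /eqP ->.
rewrite /=; case: eqP => [->|/eqP nk1]; first by rewrite /tdiv /= eqxx.
by apply: IH; rewrite -ltnS ltn_neqAle nk1.
Qed.

Lemma tdivS b u k : tdiv b u k.+1 =
  (b k.+1 - \sum_(i < k.+1) iter i sigma (u (k.+1 - i)%N) * tdiv b u i)
    / iter k.+1 sigma (u 0%N).
Proof.
rewrite {1}/tdiv /= eqxx; congr ((_ - _) / _).
by apply: eq_bigr => i _; rewrite tdiv_uptoE // -ltnS.
Qed.

Lemma tdivK b u : u 0%N != 0 -> tmul u (tdiv b u) = b.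
Proof.
move=> u0; apply: functional_extensionality => -[|k]; rewrite /tmul.
  by rewrite big_ord1 subnn /tdiv /= mulrC divfK.
rewrite big_ord_recr /= subnn tdivS mulrC divfK ?fmorph_eq0 //.
by rewrite addrC subrK.
Qed.

End TwistedProduct.

Lemma solve_leibniz1 (F : fieldType) (a s sa ss c y : F) : s != 0 -> ss != 0 ->
  (ss - s) * c * (a / s) + ss * y = (sa - a) * c -> y = (sa / ss - a / s) * c.
Proof.
move=> s0 ss0 /(canRL (addKr _)) h; apply: (mulfI ss0); rewrite h.
by field; rewrite s0 ss0.
Qed.

Section Extension.
Variables (R : idomainType) (sig : {rmorphism R -> R}).
Hypothesis sig_inj : injective sig.
Local Notation K := {fraction R}.
Local Notation sK := (frac_lift sig).

HB.instance Definition _ :=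
  GRing.isZmodMorphism.Build K K sK (frac_lift_is_zmod_morphism sig_inj).
HB.instance Definition _ :=
  GRing.isMonoidMorphism.Build K K sK (frac_lift_is_monoid_morphism sig_inj).

Lemma iter_frac_lift_tofrac i a : iter i sK a%:F = (iter i sig a)%:F.
Proof. by elim: i => //= i ->; rewrite frac_lift_tofrac. Qed.

Variables (dR : nat -> R -> R) (iota : R).
Hypothesis dR0 : forall a, dR 0 a = a.
Hypothesis dR1 : forall a, dR 1 a = (sig a - a) * iota.
Hypothesis dRD : forall k a b, dR k (a + b) = dR k a + dR k b.
Hypothesis dRM : forall k a b,
  dR k (a * b) = \sum_(i < k.+1) iter i sig (dR (k - i)%N a) * dR i b.

Definition taylor (a : R) : nat -> K := fun k => (dR k a)%:F.

Lemma taylor_coef0 a : taylor a 0 = a%:F.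
Proof. by rewrite /taylor dR0. Qed.

Lemma taylor_coef0_eq0 a : (taylor a 0 == 0) = (a == 0).
Proof. by rewrite taylor_coef0 tofrac_eq0. Qed.

Lemma taylorM a b : taylor (a * b) = tmul sK (taylor a) (taylor b).
Proof.
apply: functional_extensionality => k; rewrite /taylor dRM rmorph_sum.
by apply: eq_bigr => i _; rewrite rmorphM /= iter_frac_lift_tofrac.
Qed.

Lemma taylor_tmulI a : a != 0 -> injective (tmul sK (taylor a)).
Proof. by rewrite -taylor_coef0_eq0; apply: tmulI. Qed.

(* delta on fractions, read off the product rule for x = n/d. *)
Definition taylorF (x : K) : nat -> K :=
  tdiv sK (taylor \n_(repr x)) (taylor \d_(repr x)).

Lemma taylorF_frac a s : s != 0 ->
  tmul sK (taylor s) (taylorF (a%:F / s%:F)) = taylor a.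
Proof.
move=> s0; rewrite /taylorF; set x := a%:F / s%:F.
set n := \n_(repr x); set d := \d_(repr x).
have d0 : d != 0 := denom_ratioP _.
have : x == n%:F / d%:F by rewrite -frac_numden.
rewrite eq_frac // => /eqP ad.
apply: (taylor_tmulI d0).
rewrite tmulA -taylorM mulrC taylorM -tmulA tdivK ?taylor_coef0_eq0 //.
by rewrite -!taylorM mulrC -ad mulrC.
Qed.

Lemma taylorF_tofrac a : taylorF a%:F = taylor a.
Proof.
apply: (taylor_tmulI (oner_neq0 R)).
have := taylorF_frac a (oner_neq0 R); rewrite tofrac1 divr1 => ->.
by rewrite -taylorM mul1r.
Qed.

Lemma taylorFM x y : taylorF (x * y) = tmul sK (taylorF x) (taylorF y).
Proof.
have [a [s [s0 ->]]] := frac_repr x; have [b [u [u0 ->]]] := frac_repr y.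
apply: (taylor_tmulI (mulf_neq0 s0 u0)).
rewrite mulf_div -!tofracM taylorF_frac ?mulf_neq0 //.
rewrite [s * u]mulrC [taylor (u * s)]taylorM -tmulA (tmulA _ (taylor s)) taylorF_frac //.
rewrite tmulA -taylorM [u * a]mulrC [taylor (a * u)]taylorM -tmulA.
by rewrite taylorF_frac // -taylorM.
Qed.

Lemma taylorFD x y : taylorF (x + y) = fun k => taylorF x k + taylorF y k.
Proof.
have [a [s [s0 ->]]] := frac_repr x; have [b [u [u0 ->]]] := frac_repr y.
apply: (taylor_tmulI (mulf_neq0 s0 u0)).
rewrite addf_div ?tofrac_eq0 // -!tofracM -tofracD.
rewrite taylorF_frac ?mulf_neq0 // tmulDr.
rewrite [s * u]mulrC [in X in _ = fun k => X k + _]taylorM -tmulA taylorF_frac //.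
rewrite mulrC taylorM -tmulA taylorF_frac // -!taylorM.
by apply: functional_extensionality => k; rewrite /taylor dRD rmorphD mulrC [b * s]mulrC.
Qed.

Lemma taylorF_coef0 x : taylorF x 0 = x.
Proof.
have [a [s [s0 ->]]] := frac_repr x.
have := congr1 (fun v => v 0%N) (taylorF_frac a s0).
rewrite /tmul big_ord1 /= !taylor_coef0 => h.
by apply: (@mulfI _ s%:F); rewrite ?tofrac_eq0 // h mulrC divfK ?tofrac_eq0.
Qed.

Lemma taylorF_coef1 x : taylorF x 1 = (sK x - x) * iota%:F.
Proof.
have [a [s [s0 ->]]] := frac_repr x.
have := congr1 (fun v => v 1%N) (taylorF_frac a s0).
rewrite /tmul big_ord_recr big_ord1 /= taylorF_coef0 /taylor !dR0 !dR1.
rewrite (frac_lift_frac sig_inj) // !rmorphM !rmorphB /= (frac_lift_tofrac sig_inj).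
by apply: solve_leibniz1; rewrite tofrac_eq0 ?(rmorph_inj_eq0 sig_inj).
Qed.

Lemma taylorF_sum n (F : 'I_n -> K) k :
  taylorF (\sum_(j < n) F j) k = \sum_(j < n) taylorF (F j) k.
Proof.
have taylorF0 : taylorF 0 k = 0.
  have := congr1 (fun v => v k) (taylorFD 0 0).
  by rewrite /= addr0 -{1}[taylorF 0 k]addr0 => /addrI.
by apply: (big_morph (fun x => taylorF x k)) => // x y; rewrite taylorFD.
Qed.

Section Localization.
Variable S : pred R.
Hypotheses (S1 : 1 \in S) (S0 : 0 \notin S).
Hypothesis SM : forall s t, s \in S -> t \in S -> s * t \in S.
Hypothesis Ssig : forall s, s \in S -> sig s \in S.

Lemma iter_sig_in_S k s : s \in S -> iter k sig s \in S.
Proof. by move=> sS; elim: k => //= k; apply: Ssig. Qed.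

Lemma S_neq0 s : s \in S -> s != 0.
Proof. by apply: contraTneq => ->. Qed.

Lemma loc_tofrac a : loc S a%:F.
Proof. by exists a, 1; rewrite S1 tofrac1 divr1. Qed.

Lemma loc_tofracV s : s \in S -> loc S s%:F^-1.
Proof. by exists 1, s; rewrite tofrac1 div1r. Qed.

Lemma loc_add x y : loc S x -> loc S y -> loc S (x + y).
Proof.
move=> [a [s [sS ->]]] [b [t [tS ->]]].
exists (a * t + b * s), (s * t); split; first exact: SM.
by rewrite addf_div ?tofrac_eq0 ?S_neq0 // tofracD !tofracM.
Qed.

Lemma loc_opp x : loc S x -> loc S (- x).
Proof. by move=> [a [s [sS ->]]]; exists (- a), s; rewrite tofracN mulNr. Qed.

Lemma loc_mul x y : loc S x -> loc S y -> loc S (x * y).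
Proof.
move=> [a [s [sS ->]]] [b [t [tS ->]]].
exists (a * b), (s * t); split; first exact: SM.
by rewrite mulf_div !tofracM.
Qed.

Lemma loc_sum n (F : 'I_n -> K) : (forall i, loc S (F i)) -> loc S (\sum_(i < n) F i).
Proof.
move=> locF; elim/big_rec: _ => [|i y _]; last exact: loc_add.
by rewrite -tofrac0; apply: loc_tofrac.
Qed.

Lemma loc_taylorF k x : loc S x -> loc S (taylorF x k).
Proof.
move=> [a [s [sS ->]]]; elim/ltn_ind: k => k IH.
have sk0 : (iter k sig s)%:F != 0 by rewrite tofrac_eq0 S_neq0 // iter_sig_in_S.
have := congr1 (fun v => v k) (taylorF_frac a (S_neq0 sS)).
rewrite /tmul big_ord_recr /= subnn taylor_coef0 iter_frac_lift_tofrac.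
move=> /(canRL (addKr _)) /(canRL (mulKf sk0)) ->.
apply: loc_mul; first exact/loc_tofracV/iter_sig_in_S.
apply: loc_add; last exact: loc_tofrac.
apply/loc_opp/loc_sum => i; apply: loc_mul; last exact: IH.
by rewrite /taylor iter_frac_lift_tofrac; apply: loc_tofrac.
Qed.

Lemma taylorF_unique (d1 d2 : nat -> K -> K) :
  (forall k x y, loc S x -> loc S y ->
     d1 k (x * y) = tmul sK (fun n => d1 n x) (fun n => d1 n y) k) ->
  (forall k x y, loc S x -> loc S y ->
     d2 k (x * y) = tmul sK (fun n => d2 n x) (fun n => d2 n y) k) ->
  (forall k a, d1 k a%:F = (dR k a)%:F) -> (forall k a, d2 k a%:F = (dR k a)%:F) ->
  forall k x, loc S x -> d1 k x = d2 k x.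
Proof.
move=> M1 M2 E1 E2 k x lx; have [a [s [sS ex]]] := lx.
have onR d : (forall k a, d k a%:F = (dR k a)%:F) -> (fun n => d n s%:F) = taylor s.
  by move=> E; apply: functional_extensionality => n; rewrite E.
suff /(congr1 (fun v => v k)) : (fun n => d1 n x) = (fun n => d2 n x) by [].
apply: (taylor_tmulI (S_neq0 sS)); rewrite -{1}(onR d1 E1) -(onR d2 E2).
apply: functional_extensionality => n.
rewrite -(M1 _ _ _ (loc_tofrac s) lx) -(M2 _ _ _ (loc_tofrac s) lx).
by rewrite ex mulrC divfK ?tofrac_eq0 ?S_neq0 // E1 E2.
Qed.

End Localization.

Definition leibniz2_coef u i j m l : K :=
  iter m sK (taylorF (iter l sK (taylor u (j - l)%N)) (i - m)%N).

Lemma taylorF2_mul u x i j : taylorF (taylorF (u%:F * x) j) i =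
  \sum_(l < j.+1) \sum_(m < i.+1) leibniz2_coef u i j m l * taylorF (taylorF x l) m.
Proof.
rewrite taylorFM taylorF_tofrac /tmul taylorF_sum; apply: eq_bigr => l _.
by rewrite taylorFM /tmul.
Qed.

Definition taylor_row N x : 'rV[K]_N.+1 := \row_k taylorF x k.

Definition taylor_mx N u : 'M[K]_N.+1 :=
  \matrix_(r, k) if (r <= k)%N then iter r sK (taylor u (k - r)%N) else 0.

Lemma taylor_rowM N u x : taylor_row N (u%:F * x) = taylor_row N x *m taylor_mx N u.
Proof.
apply/rowP => k; rewrite !mxE taylorFM taylorF_tofrac /tmul.
pose T r := iter r sK (taylor u (k - r)%N) * taylorF x r.
rewrite (big_ord_widen N.+1 T (ltn_ord k)) big_mkcond; apply: eq_bigr => r _; rewrite !mxE ltnS.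
by case: ifP => _; [rewrite mulrC | rewrite mulr0].
Qed.

Lemma det_taylor_mx N u : \det (taylor_mx N u) = \prod_(r < N.+1) iter r sK u%:F.
Proof.
rewrite -det_tr det_trig; last by apply/is_trig_mxP => r k rk; rewrite !mxE leqNgt rk.
by apply: eq_bigr => r _; rewrite !mxE leqnn subnn taylor_coef0.
Qed.

(* Cayley-Hamilton writes the inverse of [taylor_mx N u] as a polynomial in
   it, and the row of a/u times its k-th power is the row of u^(k-1) a. *)
Lemma scalar_taylor_row_frac N u a (L : 'rV[K]_N.+1 -> K) : u != 0 -> scalar L ->
  (forall y, L (taylor_row N y%:F) = 0) -> L (taylor_row N (a%:F / u%:F)) = 0.
Proof.
move=> u0 Llin LR.
pose L' : {scalar 'rV[K]_N.+1} := HB.pack L (GRing.isLinear.Build _ _ _ _ L Llin).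
have {}LR y : L' (taylor_row N y%:F) = 0 := LR y.
change (L' (taylor_row N (a%:F / u%:F)) = 0).
set x := a%:F / u%:F; set A := taylor_mx N u.
have ux : u%:F * x = a%:F by rewrite /x mulrC divfK ?tofrac_eq0.
have xApow k : taylor_row N x *m A ^+ k.+1 = taylor_row N (u ^+ k * a)%:F.
  elim: k => [|k IH]; first by rewrite expr1 -taylor_rowM ux expr0 mul1r.
  by rewrite exprSr -mulmxE mulmxA IH -taylor_rowM -tofracM exprS mulrA.
have : L' (taylor_row N x *m horner_mx A (char_poly A)) = 0.
  by rewrite Cayley_Hamilton mulmx0 linear0.
set P := char_poly A.
have -> : horner_mx A P = \sum_(k < N.+2) P`_k *: A ^+ k.
  rewrite -{1}(coefK P) poly_def size_char_poly linear_sum; apply: eq_bigr => k _.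
  by rewrite linearZ /= rmorphXn /= horner_mx_X.
rewrite mulmx_sumr linear_sum big_ord_recl big1 => [|k _]; last first.
  by rewrite -scalemxAr linearZ (xApow k) LR; apply: mulr0.
rewrite addr0 -scalemxAr linearZ expr0 mulmx1 => /eqP.
rewrite mulf_eq0 => /orP [|/eqP //].
rewrite char_poly_det mulf_eq0 signr_eq0 det_taylor_mx /=.
by move/prodf_eq0 => [r _]; rewrite fmorph_eq0 tofrac_eq0 (negPf u0).
Qed.

Section Iterativity.
Variable cR : nat -> nat -> R.
Hypothesis dRI : forall i j a, dR i (dR j a) = cR i j * dR (i + j)%N a.

Local Notation c i j := (cR i j)%:F.

Definition iter_defect x i j : K := taylorF (taylorF x j) i - c i j * taylorF x (i + j).

Lemma iter_defect_tofrac a i j : iter_defect a%:F i j = 0.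
Proof. by rewrite /iter_defect !taylorF_tofrac /taylor dRI rmorphM subrr. Qed.

Definition defect_form u i j : 'rV[K]_(i + j).+1 -> K := fun v =>
  \sum_(l < j.+1) \sum_(m < i.+1)
     leibniz2_coef u i j m l * c m l * v 0 (inord (m + l))
  - c i j * \sum_(k < (i + j).+1) iter k sK (taylor u (i + j - k)%N) * v 0 k.
Arguments defect_form u i j : clear implicits.

Lemma defect_form_scalar u i j : scalar (defect_form u i j).
Proof.
move=> a v w; rewrite /defect_form /= mulrBr addrACA -opprD; congr (_ - _).
  rewrite mulr_sumr -big_split; apply: eq_bigr => l _ /=.
  rewrite mulr_sumr -big_split; apply: eq_bigr => m _ /=.
  by rewrite !mxE mulrDr mulrCA.
rewrite [a * _]mulrCA -mulrDr; congr (_ * _); rewrite mulr_sumr -big_split.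
by apply: eq_bigr => k _; rewrite !mxE mulrDr mulrCA.
Qed.

Lemma iter_defect_mul u x i j :
  iter_defect (u%:F * x) i j =
  \sum_(l < j.+1) \sum_(m < i.+1) leibniz2_coef u i j m l * iter_defect x m l
  + defect_form u i j (taylor_row (i + j) x).
Proof.
rewrite /defect_form addrA; congr (_ - _); last first.
  rewrite taylorFM taylorF_tofrac; congr (_ * _); apply: eq_bigr => k _.
  by rewrite mxE.
rewrite taylorF2_mul -big_split; apply: eq_bigr => l _ /=.
rewrite -big_split; apply: eq_bigr => m _ /=.
rewrite mxE inordK; last by rewrite ltnS leq_add // -ltnS.
by rewrite /iter_defect mulrBr mulrA subrK.
Qed.

Lemma defect_form_frac u a i j : u != 0 ->
  defect_form u i j (taylor_row (i + j) (a%:F / u%:F)) = 0.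
Proof.
move=> u0; apply: scalar_taylor_row_frac => // [|y]; first exact: defect_form_scalar.
have := iter_defect_mul u y%:F i j; rewrite -tofracM !iter_defect_tofrac.
rewrite big1 ?add0r => [<- //|l _]; apply: big1 => m _.
by rewrite iter_defect_tofrac mulr0.
Qed.

Lemma iter_defect_eq0 x i j : iter_defect x i j = 0.
Proof.
have [a [u [u0 ->]]] := frac_repr x.
move: {2}(i + j)%N (erefl (i + j)%N) => n; elim/ltn_ind: n i j => n IH i j ijn.
have := iter_defect_mul u (a%:F / u%:F) i j.
rewrite mulrC divfK ?tofrac_eq0 // iter_defect_tofrac defect_form_frac // addr0.
rewrite big_ord_recr big1 => [|l _]; last first.
  apply: big1 => m _; rewrite (IH (m + l)%N) ?mulr0 // -ijn.
  by have := ltn_ord l; have := ltn_ord m; lia.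
rewrite big_ord_recr big1 => [|m _]; last first.
  by rewrite (IH (m + j)%N) ?mulr0 // -ijn; have := ltn_ord m; lia.
rewrite /leibniz2_coef /= !subnn taylor_coef0 taylorF_coef0.
rewrite !add0r => /esym/eqP.
by rewrite mulf_eq0 !fmorph_eq0 tofrac_eq0 (negPf u0) => /eqP.
Qed.

Lemma taylorF_iter x i j : taylorF (taylorF x j) i = c i j * taylorF x (i + j).
Proof. by apply/subr0_eq; apply: iter_defect_eq0. Qed.

End Iterativity.
End Extension.

Theorem proposition2p19
  (C : closedFieldType) (q : C) (hq1 : q != 1) (hq0 : q != 0)
  (R : idomainType) (phi : {rmorphism ratfun C -> R})
  (sig : {rmorphism R -> R}) (sig_bij : bijective sig)
  (sig_ext : forall f : ratfun C, sig (phi f) = phi (sigmaF q f))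
  (dR : nat -> R -> R)
  (hdR : is_iter_qdiff q (fun _ => True) phi sig dR)
  (S : pred R) (S1 : 1 \in S)
  (SM : forall s t, s \in S -> t \in S -> s * t \in S)
  (S0 : 0 \notin S)
  (Ssig : forall s, s \in S -> sig s \in S) :
  (exists d : nat -> {fraction R} -> {fraction R},
      is_iter_qdiff q (loc S) (fun f => (phi f)%:F) (frac_lift sig) d
      /\ forall k a, d k a%:F = (dR k a)%:F)
  /\
  (forall d1 d2 : nat -> {fraction R} -> {fraction R},
      is_iter_qdiff q (loc S) (fun f => (phi f)%:F) (frac_lift sig) d1 ->
      (forall k a, d1 k a%:F = (dR k a)%:F) ->
      is_iter_qdiff q (loc S) (fun f => (phi f)%:F) (frac_lift sig) d2 ->
      (forall k a, d2 k a%:F = (dR k a)%:F) ->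
      forall k x, loc S x -> d1 k x = d2 k x).
Proof.
have sig_inj := bij_inj sig_bij.
have [[_ dR0 dR1] [dRD dRM dRI]] := hdR.
have {}dR0 a := dR0 a I; have {}dR1 a := dR1 a I.
have {}dRD k a b := dRD k a b I I; have {}dRM k a b := dRM k a b I I.
have {}dRI i j a := dRI i j a I.
split.
  exists (fun k x => taylorF sig_inj dR x k).
  split; last by move=> k a; rewrite taylorF_tofrac.
  split; split=> *.
  - by apply: loc_taylorF.
  - by apply: taylorF_coef0.
  - by apply: taylorF_coef1.
  - by rewrite taylorFD.
  - by rewrite taylorFM.
  - by rewrite (taylorF_iter sig_inj dR0 dRD dRM dRI).
move=> d1 d2 [_ [_ M1 _]] E1 [_ [_ M2 _]] E2.
exact: taylorF_unique M1 M2 E1 E2.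
Qed.
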